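(* For integers $a,t$ let $$f_{a,1,t}(X)=X^3+a^2(a^3-2)X^2-a(a^3-1)X+1+tX(aX-1)\in\mathbf{Z}[X].$$ There exists an integer $A\geq 1$ such that for all integers $t\geq 1$ and $a\geq A$, the polynomial $f_{a,1,t}(X)$ is irreducible over $\mathbf{Q}$. *)

From mathcomp Require Import all_boot all_order all_algebra.
Set Implicit Arguments. Unset Strict Implicit. Unset Printing Implicit Defensive.
Import GRing.Theory Num.Theory.
Local Open Scope ring_scope.

Definition f_a1t (a t : int) : {poly int} :=
  'X^3 + (a ^+ 2 * (a ^+ 3 - 2))%:P * 'X^2 - (a * (a ^+ 3 - 1))%:P * 'X + 1
  + t%:P * 'X * (a%:P * 'X - 1).

Definition f_a1t_Q (a t : int) : {poly rat} := map_poly (intr : int -> rat) (f_a1t a t).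

(** A rational root of a monic integer polynomial is an integer dividing its
    constant term (here via Gauss's lemma [dvdpP_rat_int]).  The constant
    term of [f_a1t a t] is 1, so its only candidate rational roots are 1 and
    -1, and both values f(1) and f(-1) are positive for a, t >= 1.  A cubic
    without rational roots is irreducible over Q, so A = 1 works. *)

From mathcomp Require Import all_boot all_order all_algebra.
From mathcomp Require Import ring zify.
Import Order.TTheory GRing.Theory Num.Theory.
Local Open Scope ring_scope.

Lemma monic_int_rat_root {p : {poly int}} {x : rat} :
    p \is monic -> root (map_poly intr p) x ->
  exists2 k : int, x = k%:~R & (k %| p`_0)%Z.
Proof.
move=> /monicP lead_p; rewrite -dvdp_XsubCl.
case/dvdpP_rat_int=> q [c c_neq0 Dq] [r Dp].
have coefDq i : ('X - x%:P)`_i = c * (q`_i)%:~R by rewrite Dq coefZ coef_map.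
have size_q : size q = 2.
  by rewrite -(size_rat_int_poly q) -(size_scale _ c_neq0) -Dq size_XsubC.
have q1_r : q`_1 * lead_coef r = 1.
  by rewrite -lead_p Dp lead_coefM /lead_coef size_q.
have c_r : c = (lead_coef r)%:~R.
  have c_q1 : c * (q`_1)%:~R = 1 by rewrite -coefDq coefB coefX coefC.
  have : c * (q`_1 * lead_coef r)%:~R = c by rewrite q1_r mulr1.
  by rewrite intrM mulrA c_q1 mul1r => <-.
exists (- (lead_coef r * q`_0)).
  by rewrite mulrNz intrM -c_r -coefDq coefB coefX coefC sub0r opprK.
rewrite Dp coef0M dvdzE abszN -dvdzE; apply: dvdz_mulr.
by apply/dvdzP; exists q`_1; rewrite mulrA q1_r mul1r.
Qed.

Section MonicXnAdd.
Variables (R : nzRingType) (n : nat) (q : {poly R}).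
Hypothesis size_q : (size q <= n)%N.

Lemma size_XnDl : size ('X^n + q) = n.+1.
Proof. by rewrite size_polyDl size_polyXn. Qed.

Lemma monicXnDl : 'X^n + q \is monic.
Proof. by rewrite monicE lead_coefDl ?size_polyXn ?lead_coefXn. Qed.

End MonicXnAdd.

Lemma size_quadratic_leq (R : nzRingType) (b c d : R) :
  (size (b%:P * 'X^2 + c%:P * 'X + d%:P)%R <= 3)%N.
Proof.
have size_scaleXn_le k (e : R) : (size (e *: 'X^k) <= k.+1)%N.
  by rewrite (leq_trans (size_scale_leq _ _)) ?size_polyXn.
rewrite !mul_polyC (leq_trans (size_polyD _ _)) // geq_max.
rewrite (leq_trans (size_polyC_leq1 d)) // andbT.
rewrite (leq_trans (size_polyD _ _)) // geq_max size_scaleXn_le.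
by rewrite (leq_trans (size_scaleXn_le 1%N c)).
Qed.

Lemma f_a1tE a t : f_a1t a t =
  'X^3 + ((a ^+ 5 - 2 * a ^+ 2 + t * a)%:P * 'X^2 + (a - a ^+ 4 - t)%:P * 'X + 1%:P).
Proof. by rewrite /f_a1t; ring. Qed.

Lemma monic_f_a1t a t : f_a1t a t \is monic.
Proof. by rewrite f_a1tE monicXnDl ?size_quadratic_leq. Qed.

Lemma size_f_a1t a t : size (f_a1t a t) = 4.
Proof. by rewrite f_a1tE size_XnDl ?size_quadratic_leq. Qed.

Lemma coef0_f_a1t a t : (f_a1t a t)`_0 = 1.
Proof. by rewrite -horner_coef0 f_a1tE !hornerE /=; ring. Qed.

Lemma f_a1t_at1_gt0 a t : 1 <= a -> 0 <= t -> 0 < (f_a1t a t).[1].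
Proof.
move=> a_ge1 t_ge0; rewrite f_a1tE !hornerE /=.
(* f(1) = (a - 1)(a^4 - 2a - 1 + t) + 1, and a^4 - 2a - 1 < 0 only at a = 1. *)
have [->|a_ge2] : a = 1 \/ 2 <= a by lia.
  by rewrite expr1n; lia.
nia.
Qed.

Lemma f_a1t_atN1_gt0 a t : 1 <= a -> 1 <= t -> 0 < (f_a1t a t).[-1].
Proof. by move=> a_ge1 t_ge1; rewrite f_a1tE !hornerE /=; nia. Qed.

Theorem mainTheorem2 :
  exists A : int, 1 <= A /\
    forall t a : int, 1 <= t -> A <= a -> irreducible_poly (f_a1t_Q a t).
Proof.
exists 1; split=> // t a t_ge1 a_ge1.
apply: cubic_irreducible; first by rewrite size_rat_int_poly size_f_a1t.
move=> x; apply/negP=> root_x.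
have [k xE k_dvd1] := monic_int_rat_root (monic_f_a1t a t) root_x.
move: root_x; rewrite xE /root horner_map intr_eq0.
have [->|->] : k = 1 \/ k = -1 by move: k_dvd1; rewrite coef0_f_a1t dvdz1; lia.
  by rewrite gt_eqF ?f_a1t_at1_gt0 // ltW.
by rewrite gt_eqF ?f_a1t_atN1_gt0.
Qed.
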